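(* The generalized DFT $\mathcal{F}:V_\Omega\to V_A$ and the generalized IDFT $\mathcal{F}^{-1}:V_A\to V_\Omega$ (defined below) are mutually inverse linear maps: $\mathcal{F}^{-1}(\mathcal{F}((c_{\underline\omega})_\Omega))=(c_{\underline\omega})_\Omega$ for all $(c_{\underline\omega})_\Omega\in V_\Omega$ and $\mathcal{F}(\mathcal{F}^{-1}((h_{\underline a})_A))=(h_{\underline a})_A$ for all $(h_{\underline a})_A\in V_A$.
   Context: Let $q$ be a prime power, $\mathbb{F}_q$ the field with $q$ elements, and $N\ge 1$ an integer. For a finite set $S$, $V_S$ denotes the $\mathbb{F}_q$-vector space of vectors $(v_s)_{S}=(v_s)_{s\in S}$ with entries in $\mathbb{F}_q$ indexed by $S$. Let $A=A_N=\{0,1,\dots,q-1\}^N$ and $\Omega=\Omega_N=\mathbb{F}_q^N$. For $\underline\omega=(\omega_1,\dots,\omega_N)\in\mathbb{F}_q^N$ and $\underline a=(a_1,\dots,a_N)\in\mathbb{N}_0^N$ write $\underline\omega^{\underline a}=\omega_1^{a_1}\cdots\omega_N^{a_N}$, with the convention $0^0=1$. Generalized DFT: $\mathcal{F}=\mathcal{F}_N:V_\Omega\to V_A$, $(c_{\underline\omega})_\Omega\mapsto(h_{\underline a})_A$ with $h_{\underline a}=\sum_{\underline\omega\in\Omega}c_{\underline\omega}\underline\omega^{\underline a}$. Generalized IDFT: $\mathcal{F}^{-1}=\mathcal{F}_N^{-1}:V_A\to V_\Omega$, $(h_{\underline a})_A\mapsto(c_{\underline\omega})_\Omega$, defined as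 follows. For $\underline\omega\in\Omega$ let $I=I_{\underline\omega}=\{i_1<\dots<i_m\}=\{i:\omega_i\ne0\}\subseteq\{1,\dots,N\}$ (so $m$ is the number of nonzero coordinates). Then $$c_{\underline\omega}=(-1)^m\sum_{l_1,\dots,l_m=1}^{q-1}\Big\{\sum_{J\subseteq\{1,\dots,N\}\setminus I}(-1)^{|J|}h_{\underline i(I,J)}\Big\}\omega_{i_1}^{-l_1}\cdots\omega_{i_m}^{-l_m},$$ where $J$ runs over all subsets of $\{1,\dots,N\}\setminus I$ and $\underline i(I,J)=(b_1,\dots,b_N)\in A$ is given by $b_{i_j}=l_j$ for $1\le j\le m$, $b_i=q-1$ for $i\in J$, and $b_i=0$ for $i\notin I\cup J$. (For $m=0$ the outer sum has the single empty term.) *)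

From HB Require Import structures.
From mathcomp Require Import all_boot all_order all_algebra all_field.
Set Implicit Arguments. Unset Strict Implicit. Unset Printing Implicit Defensive.
Import GRing.Theory.
Local Open Scope ring_scope.

Notation Omega_ F N := {ffun 'I_N -> F}.
Notation Aidx_ F N := {ffun 'I_N -> 'I_#|F|}.
Notation VOmega F N := {ffun Omega_ F N -> F}.
Notation VA F N := {ffun Aidx_ F N -> F}.

Section GDFT.
Variables (F : finFieldType) (N : nat).
Local Notation Omega := (Omega_ F N).
Local Notation Aidx := (Aidx_ F N).
Local Notation VOmega := (VOmega F N).
Local Notation VA := (VA F N).

(* omega^a = prod_i omega_i^(a_i), with 0^0 = 1 (expr0) *)
Definition mpow (w : Omega) (a : Aidx) : F := \prod_(i < N) (w i) ^+ (a i).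

Definition DFT (c : VOmega) : VA :=
  [ffun a : Aidx => \sum_(w : Omega) c w * mpow w a].

Lemma qm1_lt : (#|F|.-1 < #|F|)%N.
Proof. by rewrite ltn_predL; apply/card_gt0P; exists 0. Qed.

Definition qm1 : 'I_#|F| := Ordinal qm1_lt.

Definition supp (w : Omega) : {set 'I_N} := [set i | w i != 0].

Definition zq : 'I_#|F| := Ordinal (leq_ltn_trans (leq0n _) qm1_lt).

Definition iIJ (I J : {set 'I_N}) (l : Aidx) : Aidx :=
  [ffun i => if i \in I then l i else if i \in J then qm1 else zq].

(* The tuple (l_1,...,l_m) in {1,...,q-1}^m indexed by I = {i_1<...<i_m}
   is encoded as l : Aidx with l_{i_j} = l i_j, l i <> 0 on I and l i = 0 off I. *)
Definition admissible (I : {set 'I_N}) (l : Aidx) : bool :=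
  [forall i, (i \in I) == (l i != 0%N :> nat)].

Definition IDFT (h : VA) : VOmega :=
  [ffun w : Omega =>
     let I := supp w in
     (-1) ^+ #|I| *
     \sum_(l : Aidx | admissible I l)
        (\sum_(J : {set 'I_N} | J \subset ~: I) (-1) ^+ #|J| * h (iIJ I J l))
        * \prod_(i in I) (w i) ^- (l i)].

End GDFT.

From HB Require Import structures.
From mathcomp Require Import all_boot all_order all_algebra all_field.
From mathcomp Require Import fingroup cyclic.
Set Implicit Arguments. Unset Strict Implicit. Unset Printing Implicit Defensive.
Import GRing.Theory.
Local Open Scope ring_scope.

(* The DFT of a vector c is
   \sum_v c_v chi_v, where chi_v = (v^a)_a is the DFT of the indicator of v, so
   by linearity IDFT (DFT c) = c follows from the orthogonality relation
   IDFT chi_v = delta_v (the indicator of v).  That relation is proved coordinatewise, using three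
   facts about F: 1 - x^(q-1) is the indicator of x = 0, the nonzero powers
   x^1 + ... + x^(q-1) sum to -[x = 1], and q = 0 in F.  With them, the
   alternating sum over J collapses (expanding a product over the subsets J)
   to the indicator that v vanishes off supp w, and the sum over admissible
   exponents l factors into a product of geometric sums which detects
   v_i = w_i on supp w.  Finally DFT is injective between spaces of equal
   finite cardinality q^(q^N), hence bijective, and DFT (IDFT h) = h. *)

Lemma sum_subset_prod (T : finType) (R : comNzRingType) (A : {set T}) (f : T -> R) :
  \sum_(J : {set T} | J \subset A) \prod_(i in J) f i = \prod_(i in A) (1 + f i).
Proof.
transitivity (\prod_(i in A) \sum_(b : bool) (if b then f i else 1)); last first.
  by apply: eq_bigr => i _; rewrite big_bool /= addrC.
rewrite (big_distr_big_dep false).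
rewrite (reindex_onto (fun J : {set T} => [ffun i => i \in J]) (fun g => [set i | g i])) /=;
  last by move=> g _; apply/ffunP => i; rewrite !ffunE inE.
apply: eq_big => [J | J sJA].
  have -> : [set i | [ffun i0 => i0 \in J] i] == J.
    by apply/eqP/setP => i; rewrite inE ffunE.
  rewrite andbT; apply/subsetP/familyP => [sJ i | famJ i iJ].
    rewrite ffunE; case: ifP => iA /=; first by rewrite inE.
    by rewrite inE; apply/eqP/negbTE; apply: contraFN iA; apply: sJ.
  by move: (famJ i); rewrite ffunE iJ; case: (i \in A) => //= /eqP.
rewrite [RHS](big_setID J) /= (setIidPr sJA).
rewrite [X in _ * X]big1 ?mulr1; last first.
  by move=> i; rewrite inE => /andP [iJ _]; rewrite ffunE (negbTE iJ).
by apply: eq_bigr => i iJ; rewrite ffunE iJ.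
Qed.

Section FiniteFieldPowers.
Variable F : finFieldType.

(* The characteristic of F divides q = #|F|: adding 1 to itself q times is the
   q-th power of 1 in the additive group of F. *)
Lemma natr_card : (#|F|%:R : F) = 0.
Proof.
have := @expg_cardG F [set: F]%G (GRing.one F) (in_setT _).
by rewrite cardsT FinRing.zmodXgE FinRing.zmod1gE.
Qed.

Lemma one_sub_expr_pred_card (x : F) : 1 - x ^+ #|F|.-1 = (x == 0)%:R.
Proof.
have q_gt1 := finNzRing_gt1 F.
have [->|x_neq0] := eqVneq x 0.
  by rewrite expr0n -subn1 subn_eq0 leqNgt q_gt1 subr0.
apply/eqP; rewrite subr_eq0 eq_sym; apply/eqP/(mulfI x_neq0).
by rewrite -exprS prednK ?expf_card ?mulr1 // ltnW.
Qed.

Lemma sum_nonzero_powers (x : F) :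
  \sum_(j : 'I_#|F| | j != 0%N :> nat) x ^+ j = - (x == 1)%:R.
Proof.
have -> : \sum_(j : 'I_#|F| | j != 0%N :> nat) x ^+ j = \sum_(j < #|F|) x ^+ j - 1.
  rewrite [X in _ = X - 1](bigD1 (zq F)) //= expr0 addrC addrK.
  by apply: eq_bigl => j; congr (~~ _); apply/eqP/eqP => [/(congr1 val)|/val_inj].
have [->|x_neq1] := eqVneq x 1.
  under eq_bigr do rewrite expr1n.
  by rewrite sumr_const card_ord natr_card sub0r.
have : (x - 1) * \sum_(j < #|F|) x ^+ j = (x - 1) * 1.
  by rewrite -subrX1 expf_card mulr1.
by move/(mulfI _) ->; rewrite ?subrr ?oppr0 // subr_eq0.
Qed.

End FiniteFieldPowers.

Section GeneralizedDFT.
Variables (F : finFieldType) (N : nat).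
Local Notation Omega := (Omega_ F N).
Local Notation Aidx := (Aidx_ F N).

Lemma DFT_is_linear (k : F) (c d : VOmega F N) :
  DFT [ffun w => k * c w + d w] = [ffun a => k * DFT c a + DFT d a].
Proof.
apply/ffunP => a; rewrite !ffunE mulr_sumr -big_split.
by apply: eq_bigr => w _; rewrite !ffunE mulrDl mulrA.
Qed.

Lemma IDFT_is_linear (k : F) (h g : VA F N) :
  IDFT [ffun a => k * h a + g a] = [ffun w => k * IDFT h w + IDFT g w].
Proof.
apply/ffunP => w; rewrite !ffunE /=.
rewrite mulrCA -mulrDr; congr (_ * _).
rewrite mulr_sumr -big_split; apply: eq_bigr => l _.
rewrite /= mulrA -mulrDl; congr (_ * _).
rewrite mulr_sumr -big_split; apply: eq_bigr => J _.
by rewrite !ffunE mulrDr mulrCA.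
Qed.

Lemma IDFT_combination (I : Type) (r : seq I) (a : I -> F) (x : I -> VA F N) :
  IDFT [ffun b => \sum_(i <- r) a i * x i b]
  = [ffun w => \sum_(i <- r) a i * IDFT (x i) w].
Proof.
elim: r => [|i r IHr].
  apply/ffunP => w; rewrite !ffunE big_nil /= big1 ?mulr0 // => l _.
  by rewrite big1 ?mul0r // => J _; rewrite ffunE big_nil mulr0.
set rest := [ffun b => \sum_(j <- r) a j * x j b].
have -> : [ffun b => \sum_(j <- i :: r) a j * x j b] = [ffun b => a i * x i b + rest b].
  by apply/ffunP => b; rewrite !ffunE big_cons.
rewrite IDFT_is_linear IHr; apply/ffunP => w.
by rewrite [LHS]ffunE [RHS]ffunE big_cons [X in _ + X]ffunE.
Qed.

Definition chi (v : Omega) : VA F N := [ffun a => mpow v a].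

Lemma DFT_expansion (c : VOmega F N) : DFT c = [ffun a => \sum_v c v * chi v a].
Proof. by apply/ffunP => a; rewrite !ffunE; apply: eq_bigr => v _; rewrite ffunE. Qed.

Lemma mpow_iIJ (v : Omega) (I J : {set 'I_N}) (l : Aidx) : J \subset ~: I ->
  mpow v (iIJ I J l) = \prod_(i in I) v i ^+ l i * \prod_(i in J) v i ^+ #|F|.-1.
Proof.
move=> sJI; rewrite /mpow (bigID (mem I)) /=; congr (_ * _).
  by apply: eq_bigr => i iI; rewrite ffunE iI.
rewrite [RHS]big_mkcond [LHS]big_mkcond /=; apply: eq_bigr => i _.
rewrite ffunE; case: (boolP (i \in I)) => iI; case: (boolP (i \in J)) => iJ //=.
by move: (subsetP sJI i iJ); rewrite in_setC iI.
Qed.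

Lemma alternating_sum_chi (v : Omega) (I : {set 'I_N}) (l : Aidx) :
  \sum_(J : {set 'I_N} | J \subset ~: I) (-1) ^+ #|J| * mpow v (iIJ I J l)
  = \prod_(i in I) v i ^+ l i * \prod_(i in ~: I) (v i == 0)%:R.
Proof.
rewrite (eq_bigr (fun J : {set 'I_N} => \prod_(i in I) v i ^+ l i * \prod_(i in J) - v i ^+ #|F|.-1));
  last by move=> J sJ; rewrite (mpow_iIJ _ _ sJ) mulrCA prodrN.
rewrite -mulr_sumr sum_subset_prod; congr (_ * _).
by apply: eq_bigr => i _; rewrite one_sub_expr_pred_card.
Qed.

Lemma sum_admissible (I : {set 'I_N}) (G : 'I_N -> 'I_#|F| -> F) :
  \sum_(l : Aidx | admissible I l) \prod_(i in I) G i (l i)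
  = \prod_(i in I) \sum_(j : 'I_#|F| | j != 0%N :> nat) G i j.
Proof.
rewrite (big_distr_big_dep (zq F)); apply: eq_bigl => l.
apply/forallP/familyP => adm i; move: (adm i);
  (have -> : (i \in in_mem^~ (mem I)) = (i \in I) by []);
  case: (i \in I); rewrite /= ?inE ?unfold_in -?val_eqE /=; by case: (nat_of_ord (l i)).
Qed.

Lemma prod_coord_eq (v w : Omega) : \prod_i ((v i == w i)%:R : F) = (v == w)%:R.
Proof.
have [->|/eqP v_neq_w] := eqVneq v w; first by rewrite big1 // => i _; rewrite eqxx.
have [i vi_neq_wi] : exists i, v i != w i.
  apply/existsP; apply: contra_notT v_neq_w => /existsPn same.
  by apply/ffunP => i; apply/eqP; rewrite -[_ == _]negbK same.
by rewrite (bigD1 i) //= (negbTE vi_neq_wi) mul0r.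
Qed.

Lemma IDFT_chi (v w : Omega) : IDFT (chi v) w = (v == w)%:R.
Proof.
rewrite ffunE /=; set I := supp w.
have w_neq0 i : i \in I -> w i != 0 by rewrite inE.
rewrite (eq_bigr (fun l : Aidx => \prod_(i in ~: I) (v i == 0)%:R *
                                   \prod_(i in I) (v i / w i) ^+ l i)); last first.
  move=> l _; under eq_bigr do rewrite ffunE.
  rewrite alternating_sum_chi mulrAC mulrC -big_split /=; congr (_ * _).
  by apply: eq_bigr => i _; rewrite expr_div_n.
rewrite -mulr_sumr (sum_admissible I (fun i j => (v i / w i) ^+ j)).
have geometric i : i \in I ->
    \sum_(j : 'I_#|F| | j != 0%N :> nat) (v i / w i) ^+ j = - (v i == w i)%:R.
  move=> iI; rewrite sum_nonzero_powers.
  by rewrite -(inj_eq (mulIf (w_neq0 i iI))) mulfVK ?w_neq0 // mul1r.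
rewrite (eq_bigr _ geometric) prodrN mulrCA (mulrA ((-1) ^+ #|I|)).
rewrite -exprD -signr_odd addnn odd_double mul1r.
have vanish i : i \in ~: I -> (v i == 0)%:R = (v i == w i)%:R :> F.
  by rewrite !inE negbK => /eqP ->.
rewrite (eq_bigr _ vanish) mulrC -prod_coord_eq [RHS](bigID (mem I)) /=.
by congr (_ * _); apply: eq_bigl => i; rewrite in_setC.
Qed.

Lemma IDFT_DFT (c : VOmega F N) : IDFT (DFT c) = c.
Proof.
rewrite DFT_expansion IDFT_combination; apply/ffunP => w; rewrite ffunE.
under eq_bigr do rewrite IDFT_chi.
rewrite (bigD1 w) //= eqxx mulr1 big1 ?addr0 // => v /negbTE ->.
by rewrite mulr0.
Qed.

(* The DFT has the left inverse IDFT, so it is an injection between spaces of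
   the same finite size q^(q^N), hence onto; thus IDFT is also a right inverse. *)
Lemma DFT_IDFT (h : VA F N) : DFT (IDFT h) = h.
Proof.
have DFT_inj : injective (@DFT F N) by apply: can_inj IDFT_DFT.
have card_le : (#|VA F N| <= #|VOmega F N|)%N by rewrite !card_ffun !card_ord.
by have /codomP [c ->] := inj_card_onto DFT_inj card_le h; rewrite IDFT_DFT.
Qed.

End GeneralizedDFT.

Theorem mainTheorem1 (F : finFieldType) (N : nat) (hN : (1 <= N)%N) :
  (* F and F^{-1} are F_q-linear (vector operations written pointwise) *)
  (forall (k : F) (c d : VOmega F N),
      DFT [ffun w => k * c w + d w] = [ffun a => k * DFT c a + DFT d a]) /\
  (forall (k : F) (h g : VA F N),
      IDFT [ffun a => k * h a + g a] = [ffun w => k * IDFT h w + IDFT g w]) /\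
  (* they are mutually inverse *)
  (forall c : VOmega F N, IDFT (DFT c) = c) /\
  (forall h : VA F N, DFT (IDFT h) = h).
Proof.
split; first exact: DFT_is_linear.
split; first exact: IDFT_is_linear.
split; [exact: IDFT_DFT | exact: DFT_IDFT].
Qed.
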